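(* Let $\Sigma=\{a,b,c\}$ and let $L_\infty\subseteq\mathcal{T}_\Sigma$ be the set of $\Sigma$-trees $t$ such that on every infinite branch of $t$ the letter $a$ occurs infinitely often. Then $L_\infty$ is comeager in $\mathcal{T}_\Sigma$.
   Context: The full binary tree is $V=\{L,R\}^*$; a $\Sigma$-tree is a map $t:V\to\Sigma$ and $\mathcal{T}_\Sigma=\Sigma^V$ with the product topology ($\Sigma$ discrete). An infinite branch is an infinite sequence of vertices $\epsilon, d_1, d_1d_2,\dots$ with $d_j\in\{L,R\}$. A set is comeager if its complement is a countable union of nowhere dense sets. *)

From HB Require Import structures.
From mathcomp Require Import all_boot all_order.
From mathcomp Require Import all_classical all_reals all_analysis.
Set Implicit Arguments. Unset Strict Implicit. Unset Printing Implicit Defensive.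
Local Open Scope classical_set_scope.

Inductive dir := L | R.
(* Vertices: finite words over {L,R}; the root is [::] (epsilon). *)
Definition vertex := seq dir.

Inductive Sigma := a | b | c.
Definition Sigma_to_ord (x : Sigma) : 'I_3 :=
  match x with a => @Ordinal 3 0 isT | b => @Ordinal 3 1 isT | c => @Ordinal 3 2 isT end.
Definition ord_to_Sigma (i : 'I_3) : Sigma :=
  match val i with 0 => a | 1 => b | _ => c end.
Lemma Sigma_ordK : cancel Sigma_to_ord ord_to_Sigma.
Proof. by case. Qed.
HB.instance Definition _ := Finite.copy Sigma (can_type Sigma_ordK).
HB.instance Definition _ := isPointed.Build Sigma a.

Definition Tree := {ptws vertex -> discrete_topology Sigma}.

Definition nowhere_dense (T : topologicalType) (A : set T) : Prop :=
  (closure A)^° = set0.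

Definition comeager (T : topologicalType) (A : set T) : Prop :=
  exists N : nat -> set T,
    (forall n, nowhere_dense (N n)) /\ ~` A = \bigcup_n N n.

(* An infinite branch eps, d_1, d_1 d_2, ... is given by the direction
   sequence d : nat -> dir; its n-th vertex is d_1 ... d_n. *)
Definition branch_vertex (d : nat -> dir) (n : nat) : vertex := mkseq d n.

Definition L_infty : set Tree :=
  [set t : Tree | forall d : nat -> dir,
      forall m : nat, exists n : nat, (m <= n)%N /\ t (branch_vertex d n) = a].

(** A tree lies outside [L_infty] iff some branch avoids [a] from some level [m]
on.  The set of such trees is nowhere dense: every tree [t] is a limit of the
trees [fill_level k t] (with [k >= m]) obtained by relabelling level [k] with
[a], and since level [k] is finite, a whole neighbourhood of [fill_level k t]
keeps [a] on level [k], so no branch of its trees avoids [a] from [m] on. *)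
From HB Require Import structures.
From mathcomp Require Import all_boot all_classical all_reals all_analysis.
Set Implicit Arguments. Unset Strict Implicit. Unset Printing Implicit Defensive.
Local Open Scope classical_set_scope.

Definition dir_to_bool (d : dir) : bool := if d is L then true else false.
Definition bool_to_dir (x : bool) : dir := if x then L else R.
Lemma dir_boolK : cancel dir_to_bool bool_to_dir. Proof. by case. Qed.
HB.instance Definition _ := Finite.copy dir (can_type dir_boolK).

Lemma near_label (t : Tree) (v : vertex) : \forall s \near t, s v = t v.
Proof. exact: (@proj_continuous vertex _ v t _ (discrete_set1 (t v))). Qed.

Definition fill_level (k : nat) (t : Tree) : Tree :=
  fun v => if size v == k then a else t v.

Lemma fill_level_cvg (t : Tree) : fill_level k t @[k --> \oo] --> t.
Proof.
apply/(cvg_sup _ _ (fmap_filter _ _)) => v.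
move=> A [B [[C _ <-] Cx] BA].
exists (size v).+1 => // k /= ltvk; apply: BA; rewrite /= /fill_level ifF //.
by apply/eqP => eqvk; rewrite eqvk ltnn in ltvk.
Qed.

Lemma near_fill_level (k : nat) (t : Tree) :
  \forall s \near fill_level k t, forall v : vertex, size v = k -> s v = a.
Proof.
(* [nbhs_filter] is passed explicitly: instance resolution does not see through [Tree]. *)
have : \forall s \near fill_level k t, forall w : k.-tuple dir, s (val w) = a.
  apply: (@filter_forall _ _ (fun w (s : Tree) => s (val w) = a) _ (nbhs_filter _)) => w.
  apply: (@filterS _ _ (nbhs_filter _) _ _ _ (near_label _ (val w))) => s ->.
  by rewrite /fill_level size_tuple eqxx.
apply: (@filterS _ _ (nbhs_filter _)) => s sa v /eqP vk; exact: (sa (Tuple vk)).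
Qed.

Definition avoids_a_from (m : nat) : set Tree :=
  [set t | exists d, forall n, (m <= n)%N -> t (branch_vertex d n) <> a].

Lemma avoids_a_from_nowhere_dense (m : nat) : nowhere_dense (avoids_a_from m).
Proof.
apply/seteqP; split => // t /= clt.
have : \forall k \near \oo, closure (avoids_a_from m) (fill_level k t) /\ (m <= k)%N.
  near=> k; split; last by near: k; exact: nbhs_infty_ge.
  by near: k; exact: fill_level_cvg.
move=> /filter_ex [k [kcl mk]].
have [s [[d da] sa]] := kcl _ (near_fill_level k t).
by apply: (da k mk); apply: sa; rewrite size_mkseq.
Unshelve. all: end_near.
Qed.

Lemma setC_L_infty : ~` L_infty = \bigcup_m avoids_a_from m.
Proof.
apply/seteqP; split => t /=.
- move=> /existsNP [d] /existsNP [m] noa; exists m => //; exists d => n mn ta.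
  by apply: noa; exists n.
- move=> [m _ [d da]] tL.
  by have [n [mn ta]] := tL d m; exact: da n mn ta.
Qed.

Theorem proposition5 : comeager L_infty.
Proof.
exists avoids_a_from; split; first exact: avoids_a_from_nowhere_dense.
exact: setC_L_infty.
Qed.
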